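(* Let $\mathcal G$ be an ultragraph (with no sinks) and $X$ its ultragraph shift space. Then $X$ contains a closed, shift invariant ($\sigma(Y)\subseteq Y$), uncountable and irreducible subset $Y$ if and only if $\mathcal G$ has a vertex $v$ with $\#CP_{\mathcal G}(v)\ge2$.
   Context: An ultragraph $\mathcal G=(G^0,\mathcal G^1,r,s)$ consists of countable sets $G^0$ (vertices) and $\mathcal G^1$ (edges), a map $s:\mathcal G^1\to G^0$ and a map $r:\mathcal G^1\to P(G^0)\setminus\{\emptyset\}$. Standing assumption: $\mathcal G$ has no sinks, i.e. $s^{-1}(v)\neq\emptyset$ for every $v\in G^0$. $\mathcal G^0$ is the smallest subset of $P(G^0)$ containing $\{v\}$ for all $v\in G^0$ and $r(e)$ for all $e\in\mathcal G^1$, and closed under finite unions and nonempty finite intersections. A finite path is either an element of $\mathcal G^0$ (length $0$) or a sequence of edges $e_1\dots e_k$ with $s(e_{i+1})\in r(e_i)$ (length $k$); an infinite path is a sequence $e_1e_2\dots$ of edges with $s(e_{i+1})\in r(e_i)$ for all $i$, and $\mathfrak p^\infty$ is the set of infinite paths. The set of ultrapaths $\mathfrak p$ consists of all $A\in\mathcal G^0$ (length $0$) and all pairs $(\alpha,A)$ with $\alpha=e_1\dots e_k$ a finite path, $k\ge1$, $A\in\mathcal G^0$, $A\subseteq r(e_k)$ (length $k$). A set $A\in\mathcal G^0$ is an infinite emitter if $\{e\in\mathcal G^1:s(e)\in A\}$ is infinite, and a minimal infinite emitter if moreover no proper subset of $A$ belonging to $\mathcal G^0$ is an infinite emitter. The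 ultragraph shift space is $X=\mathfrak p^\infty\cup X_{fin}$, where $X_{fin}$ consists of all $(\alpha,A)\in\mathfrak p$ with $|\alpha|\ge1$ and $A$ a minimal infinite emitter contained in $r(\alpha)$, together with all minimal infinite emitters $A\in\mathcal G^0$. An ultrapath $p$ is an initial segment of $x\in X$ when: if $p=A\in\mathcal G^0$, then either $x$ has length $\ge1$ and its first edge has source in $A$, or $x=B\in\mathcal G^0$ with $B\subseteq A$; if $p=(\alpha,A)$ with $|\alpha|\ge1$, then the first $|\alpha|$ edges of $x$ form $\alpha$ and either $x$ has length $>|\alpha|$ and its $(|\alpha|+1)$-th edge has source in $A$, or $x=(\alpha,B)$ with $B\subseteq A$. Fix an enumeration $\mathfrak p=\{p_1,p_2,\dots\}$; the metric on $X$ is $d(x,x)=0$ and, for $x\neq y$, $d(x,y)=2^{-i}$ where $i$ is the least index such that $p_i$ is an initial segment of exactly one of $x,y$ (the topology does not depend on the enumeration). The shift map $\sigma:X\to X$ is $\sigma(\gamma_1\gamma_2\dots)=\gamma_2\gamma_3\dots$, $\sigma((\gamma_1\dots\gamma_n,A))=(\gamma_2\dots\gamma_n,A)$ if $n>1$, $\sigma((\gamma_1,A))=A$, $\sigma(A)=A$. For a closed shift invariant $Y\subseteq X$ and $n\ge1$, $B_n(Y)$ is the set of finite paths $w$ of length $n$ such that $w\gamma\in Y$ for some infinite path $\gamma$, and $B(Y)=\bigcup_n B_n(Y)$; $Y$ is irreducible if for all $u,w\in B(Y)$ there is $z\in B(Y)$ with $uzw\in B(Y)$. A closed path based at the vertex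 $v$ is a finite path $e_1e_2\dots e_k$ ($k\ge1$) with $v=s(e_1)\in r(e_k)$ and $s(e_i)\neq v$ for all $1<i\le k$; $CP_{\mathcal G}(v)$ denotes the set of closed paths based at $v$. *)

From Stdlib Require Import List Arith.
Import ListNotations.
Set Implicit Arguments.

(* An ultragraph is given by vertex type V, edge type E, source map
   s : E -> V and range map r : E -> (V -> Prop) (subsets of V as predicates). *)
Section Ultragraph.
Variables (V E : Type) (s : E -> V) (r : E -> V -> Prop).

Definition subset (A B : V -> Prop) : Prop := forall v, A v -> B v.

Definition countable_type (T : Type) : Prop :=
  exists f : T -> nat, forall x y, f x = f y -> x = y.

(* G^0: the smallest family of subsets of G^0 containing all singletons {v},
   all ranges r(e), closed under (nonempty) finite unions and nonempty finite
   intersections (equivalently, binary ones). *)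
Definition Gen0 (A : V -> Prop) : Prop :=
  forall F : (V -> Prop) -> Prop,
    (forall v, F (fun w => w = v)) ->
    (forall e, F (r e)) ->
    (forall B C, F B -> F C -> F (fun w => B w \/ C w)) ->
    (forall B C, F B -> F C -> F (fun w => B w /\ C w)) ->
    F A.

Fixpoint path_cond (l : list E) : Prop :=
  match l with
  | [] => True
  | e :: l' =>
      match l' with
      | [] => True
      | e' :: _ => r e (s e') /\ path_cond l'
      end
  end.

Definition is_path (l : list E) : Prop := l <> [] /\ path_cond l.

Definition is_infpath (f : nat -> E) : Prop := forall i, r (f i) (s (f (S i))).

Definition last_range (alpha : list E) : V -> Prop :=
  match rev alpha with
  | [] => fun _ => False
  | e :: _ => r e
  end.

(* Ultrapaths: pairs (alpha, A); alpha = [] encodes the length-0 ultrapath A. *)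
Definition is_ultrapath (p : list E * (V -> Prop)) : Prop :=
  let (alpha, A) := p in
  match alpha with
  | [] => Gen0 A
  | _ => is_path alpha /\ Gen0 A /\ subset A (last_range alpha)
  end.

Definition finite_edges (P : E -> Prop) : Prop :=
  exists l : list E, forall e, P e -> In e l.

Definition infinite_emitter (A : V -> Prop) : Prop :=
  Gen0 A /\ ~ finite_edges (fun e => A (s e)).

Definition min_inf_emitter (A : V -> Prop) : Prop :=
  infinite_emitter A /\
  forall B, Gen0 B -> subset B A -> ~ subset A B -> ~ infinite_emitter B.

(* Points of the candidate space: infinite sequences of edges, or pairs
   (alpha, A) with alpha a finite list of edges (alpha = [] encodes A). *)
Inductive xpt : Type :=
| Inf : (nat -> E) -> xpt
| Fin : list E -> (V -> Prop) -> xpt.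

Definition inX (x : xpt) : Prop :=
  match x with
  | Inf f => is_infpath f
  | Fin alpha A =>
      match alpha with
      | [] => min_inf_emitter A
      | _ => is_path alpha /\ min_inf_emitter A /\ subset A (last_range alpha)
      end
  end.

Definition shift (x : xpt) : xpt :=
  match x with
  | Inf f => Inf (fun n => f (S n))
  | Fin [] A => Fin [] A
  | Fin (_ :: alpha) A => Fin alpha A
  end.

Definition initial_segment (p : list E * (V -> Prop)) (x : xpt) : Prop :=
  let (alpha, A) := p in
  match x with
  | Inf f =>
      (forall i, i < length alpha -> Some (f i) = nth_error alpha i)
      /\ A (s (f (length alpha)))
  | Fin beta B =>
      (exists e gamma, beta = alpha ++ e :: gamma /\ A (s e))
      \/ (beta = alpha /\ subset B A)
  end.

Definition ultrapath_enumeration (p : nat -> list E * (V -> Prop)) : Prop :=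
  (forall n, is_ultrapath (p n)) /\
  (forall q, is_ultrapath q -> exists n, p n = q) /\
  (forall n m, p n = p m -> n = m).

(* With d(x,y) = 2^{-(i+1)} for i the least index with p_i an initial segment
   of exactly one of x, y (indices shifted to start at 0), and d(x,x) = 0:
   d(x,y) < 2^{-(k+1)}  <->  p_0, ..., p_k are initial segments of x iff of y. *)
Definition agree_upto (p : nat -> list E * (V -> Prop)) (k : nat) (x y : xpt) : Prop :=
  forall i, i <= k -> (initial_segment (p i) x <-> initial_segment (p i) y).

Definition closed_in_X (p : nat -> list E * (V -> Prop)) (Y : xpt -> Prop) : Prop :=
  forall x, inX x ->
    (forall k, exists y, Y y /\ agree_upto p k x y) -> Y x.

Definition shift_invariant (Y : xpt -> Prop) : Prop :=
  forall y, Y y -> Y (shift y).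

Definition uncountable_set (Y : xpt -> Prop) : Prop :=
  ~ exists f : xpt -> nat, forall x y, Y x -> Y y -> f x = f y -> x = y.

Definition concat_inf (w : list E) (g : nat -> E) : nat -> E :=
  fun i => if i <? length w then nth i w (g 0) else g (i - length w).

Definition in_lang (Y : xpt -> Prop) (w : list E) : Prop :=
  is_path w /\ exists g, is_infpath g /\ Y (Inf (concat_inf w g)).

Definition irreducible (Y : xpt -> Prop) : Prop :=
  forall u w, in_lang Y u -> in_lang Y w ->
    exists z, in_lang Y z /\ in_lang Y (u ++ z ++ w).

Definition closed_path (v : V) (c : list E) : Prop :=
  is_path c /\
  (exists e1 rest, c = e1 :: rest /\ s e1 = v /\ Forall (fun e => s e <> v) rest) /\
  last_range c v.

End Ultragraph.

From Stdlib Require Import List Arith Lia Classical ClassicalEpsilon FunctionalExtensionality.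
Import ListNotations.
Set Implicit Arguments.
Unset Strict Implicit.

(** (=>) If every vertex carries at most one closed path, irreducibility forces
    every infinite point f of Y to return to its initial vertex v = s(f 0)
    after any finite time; cutting such a return path at its successive visits
    to v writes it as a concatenation of closed paths at v, all equal to the
    unique one.  Hence f is the periodic repetition of that closed path and is
    determined by v, so the infinite points of Y inject into the countable set
    of vertices, while its finite points inject into the ultrapaths: Y is
    countable.

    (<=) Given distinct closed paths c1 <> c2 at v, every b : nat -> bool codes
    the infinite path conc b = (c_{b 0})(c_{b 1})...; closed paths at v form a
    prefix code, so b is recovered from conc b.  Y is the set of infinite paths
    all of whose finite prefixes occur in some conc b.  It is uncountable
    (Cantor), irreducible (splice two codings), shift invariant, and closed:
    limits of infinite paths in X are infinite (a finite point (a, A) is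
    separated from Y by the finitely many ultrapaths (a e, r e), e in c1 ++ c2),
    and the prefixes of such a limit are prefixes of points of Y. *)

Section Paths.
Variables (V E : Type) (s : E -> V) (r : E -> V -> Prop).

Lemma path_cond_app a y b :
  path_cond s r (a ++ y :: b) <->
  path_cond s r a /\ path_cond s r (y :: b) /\ (a <> [] -> r (last a y) (s y)).
Proof.
  induction a as [|x a IH].
  - simpl. split; [intros H; repeat split; auto; intros C; congruence | tauto].
  - destruct a as [|x' a].
    + simpl. split.
      * intros [H1 H2]. repeat split; auto.
      * intros [_ [H2 H3]]. split; auto. apply H3. discriminate.
    + change ((x :: x' :: a) ++ y :: b) with (x :: ((x' :: a) ++ y :: b)).
      change (path_cond s r (x :: ((x' :: a) ++ y :: b))) with
        (r x (s x') /\ path_cond s r ((x' :: a) ++ y :: b)).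
      change (path_cond s r (x :: x' :: a)) with (r x (s x') /\ path_cond s r (x' :: a)).
      change (last (x :: x' :: a) y) with (last (x' :: a) y).
      rewrite IH. split.
      * intros [H1 [H2 [H3 H4]]]. repeat split; auto. intros _. apply H4. discriminate.
      * intros [[H1 H2] [H3 H4]]. repeat split; auto. intros _. apply H4. discriminate.
Qed.

Lemma path_cond_nth l d :
  path_cond s r l <-> forall i, S i < length l -> r (nth i l d) (s (nth (S i) l d)).
Proof.
  induction l as [|x l IH].
  - split; [intros _ i Hi; simpl in Hi; lia | intros _; exact I].
  - destruct l as [|y l].
    + split; [intros _ i Hi; simpl in Hi; lia | intros _; exact I].
    + change (path_cond s r (x :: y :: l)) with (r x (s y) /\ path_cond s r (y :: l)).
      rewrite IH. split.
      * intros [Hxy Hl] [|i] Hi; [exact Hxy | apply Hl; simpl in *; lia].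
      * intros H. split; [apply (H 0); simpl; lia|].
        intros i Hi. apply (H (S i)). simpl in *; lia.
Qed.

Lemma last_range_last a x : a <> [] -> last_range r a = r (last a x).
Proof.
  intros H. unfold last_range. rewrite (app_removelast_last x H) at 1.
  rewrite rev_app_distr. reflexivity.
Qed.

Lemma last_range_snoc a e : last_range r (a ++ [e]) = r e.
Proof. unfold last_range. rewrite rev_unit. reflexivity. Qed.

Definition prefix (f : nat -> E) (n : nat) : list E := map f (seq 0 n).

Lemma prefix_length f n : length (prefix f n) = n.
Proof. unfold prefix. rewrite length_map, length_seq. reflexivity. Qed.

Lemma nth_error_prefix f n i : i < n -> nth_error (prefix f n) i = Some (f i).
Proof.
  intros Hi. unfold prefix. rewrite nth_error_map, nth_error_seq.
  destruct (Nat.ltb_spec i n); [reflexivity | lia].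
Qed.

Lemma nth_prefix f n i d : i < n -> nth i (prefix f n) d = f i.
Proof. intros Hi. apply nth_error_nth, nth_error_prefix, Hi. Qed.

Lemma prefix_S f n : prefix f (S n) = prefix f n ++ [f n].
Proof. unfold prefix. rewrite seq_S, map_app. reflexivity. Qed.

Lemma prefix_path f n : is_infpath s r f -> path_cond s r (prefix f n).
Proof.
  intros Hf. apply (path_cond_nth _ (f 0)). intros i Hi. rewrite prefix_length in Hi.
  rewrite !nth_prefix by lia. apply Hf.
Qed.

Lemma concat_inf_prefix f n : concat_inf (prefix f n) (fun k => f (n + k)) = f.
Proof.
  apply functional_extensionality. intros k. unfold concat_inf. rewrite prefix_length.
  destruct (Nat.ltb_spec k n).
  - apply nth_prefix. assumption.
  - f_equal. lia.
Qed.

Lemma gen0_singleton (w : V) : Gen0 r (fun x => x = w).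
Proof. intros F H1 _ _ _. apply H1. Qed.

Lemma gen0_range e : Gen0 r (r e).
Proof. intros F _ H2 _ _. apply H2. Qed.

Lemma ultrapath_intro l A :
  l <> [] -> path_cond s r l -> Gen0 r A -> subset A (last_range r l) ->
  is_ultrapath s r (l, A).
Proof. destruct l; [congruence|]. intros. simpl. repeat split; auto. Qed.

Lemma prefix_ultrapath f n :
  is_infpath s r f -> is_ultrapath s r (prefix f n, fun w => w = s (f n)).
Proof.
  intros Hf. destruct n as [|n]; [apply gen0_singleton|].
  apply ultrapath_intro.
  - unfold prefix. simpl. discriminate.
  - apply prefix_path, Hf.
  - apply gen0_singleton.
  - intros w ->. rewrite prefix_S, last_range_snoc. apply Hf.
Qed.

Lemma fin_point_extend a A e :
  inX s r (Fin a A) -> A (s e) -> path_cond s r (a ++ [e]).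
Proof.
  destruct a as [|x a]; [intros; exact I|].
  intros ((_ & Hp) & _ & HA) He. apply path_cond_app. repeat split; auto.
  intros _. rewrite <- (last_range_last e) by discriminate. apply HA, He.
Qed.

Lemma fin_point_ultrapath a A : inX s r (Fin a A) -> is_ultrapath s r (a, A).
Proof. destruct a; simpl; unfold min_inf_emitter, infinite_emitter; tauto. Qed.

Definition upath_index (p : nat -> list E * (V -> Prop)) (q : list E * (V -> Prop)) : nat :=
  epsilon (inhabits 0) (fun n => p n = q).

Lemma upath_index_spec p q :
  ultrapath_enumeration s r p -> is_ultrapath s r q -> p (upath_index p q) = q.
Proof.
  intros (_ & Hsurj & _) Hq.
  exact (epsilon_spec (inhabits 0) (fun n => p n = q) (Hsurj q Hq)).
Qed.

Section ClosedPaths.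
Variable v : V.

Lemma closed_path_length c : closed_path s r v c -> 1 <= length c.
Proof. intros (_ & (e1 & rest & -> & _) & _). simpl. lia. Qed.

Lemma closed_path_head c d : closed_path s r v c -> s (nth 0 c d) = v.
Proof. intros (_ & (e1 & rest & -> & H & _) & _). exact H. Qed.

Lemma closed_path_interior c i x :
  closed_path s r v c -> 1 <= i -> nth_error c i = Some x -> s x <> v.
Proof.
  intros (_ & (e1 & rest & -> & _ & Hrest) & _) Hi Hx.
  destruct i as [|i]; [lia|]. simpl in Hx.
  rewrite Forall_forall in Hrest. apply Hrest. exact (nth_error_In _ _ Hx).
Qed.

Definition starts_at (l : list E) : Prop := forall e t, l = e :: t -> s e = v.

Lemma closed_path_app c l :
  closed_path s r v c -> path_cond s r l -> starts_at l ->
  path_cond s r (c ++ l) /\ starts_at (c ++ l).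
Proof.
  intros Hc Hl Hstart.
  destruct Hc as ((Hne & Hpc) & (e1 & rest & Hcdef & He1 & _) & Hlast).
  split; [|intros e t; rewrite Hcdef; simpl; intros [= <- _]; exact He1].
  destruct l as [|y l]; [rewrite app_nil_r; exact Hpc|].
  apply path_cond_app. repeat split; auto. intros _.
  rewrite (Hstart y l eq_refl). rewrite <- (last_range_last y Hne). exact Hlast.
Qed.

(** Closed paths at [v] form a prefix code: a sequence of edges begins in at
    most one way with a closed path at [v] followed by a return to [v]. *)
Lemma closed_path_first_return (g : nat -> E) c c' :
  closed_path s r v c -> closed_path s r v c' ->
  (forall i, i < length c -> nth_error c i = Some (g i)) -> s (g (length c)) = v ->
  (forall i, i < length c' -> nth_error c' i = Some (g i)) -> s (g (length c')) = v ->
  c = c'.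
Proof.
  intros Hc Hc' Hg Hv Hg' Hv'.
  pose proof (closed_path_length Hc). pose proof (closed_path_length Hc').
  destruct (lt_eq_lt_dec (length c) (length c')) as [[Hlt|Heq]|Hlt].
  - exfalso. exact (closed_path_interior Hc' (i := length c) ltac:(lia) (Hg' _ Hlt) Hv).
  - apply nth_error_ext. intros i. destruct (Nat.lt_ge_cases i (length c)).
    + rewrite Hg, Hg' by lia. reflexivity.
    + rewrite !(proj2 (nth_error_None _ _)) by lia. reflexivity.
  - exfalso. exact (closed_path_interior Hc (i := length c') ltac:(lia) (Hg _ Hlt) Hv').
Qed.

Lemma first_occurrence (P : E -> Prop) (t : list E) :
  Forall (fun e => ~ P e) t \/
  exists t1 x t2, t = t1 ++ x :: t2 /\ Forall (fun e => ~ P e) t1 /\ P x.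
Proof.
  induction t as [|a t IH]; [left; constructor|].
  destruct (classic (P a)) as [Ha|Ha].
  - right. exists [], a, t. auto.
  - destruct IH as [IH | (t1 & x & t2 & -> & H1 & H2)].
    + left. constructor; auto.
    + right. exists (a :: t1), x, t2. repeat split; auto.
Qed.

Lemma closed_path_intro e1 t e :
  s e1 = v -> Forall (fun x => s x <> v) t -> path_cond s r (e1 :: t) ->
  r (last (e1 :: t) e) v -> closed_path s r v (e1 :: t).
Proof.
  intros H1 Ht Hp Hlast. split; [split; [discriminate | exact Hp]|split].
  - exists e1, t. auto.
  - rewrite (last_range_last e) by discriminate. exact Hlast.
Qed.

(** A path leaving [v] and followed by an edge leaving [v] is the
    concatenation of closed paths at [v]: cut it at its returns to [v]. *)
Lemma return_path_decomposition e1 t e :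
  s e1 = v -> path_cond s r ((e1 :: t) ++ [e]) -> s e = v ->
  exists cs, cs <> [] /\ Forall (closed_path s r v) cs /\ e1 :: t = concat cs.
Proof.
  remember (length t) as n eqn:Hn. revert e1 t Hn.
  induction n as [n IH] using lt_wf_ind. intros e1 t Hn H1 Hp He.
  destruct (first_occurrence (fun x => s x = v) t) as [Hnone | (t1 & x & t2 & -> & Ht1 & Hx)].
  - apply path_cond_app in Hp as (Hp & _ & Hlast).
    exists [e1 :: t]. split; [discriminate|]. split.
    + constructor; [|constructor]. apply (closed_path_intro (e := e)); auto.
      rewrite <- He. apply Hlast. discriminate.
    + simpl. rewrite app_nil_r. reflexivity.
  - assert (Hsplit : (e1 :: t1 ++ x :: t2) ++ [e] = (e1 :: t1) ++ x :: (t2 ++ [e]))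
      by (simpl; rewrite <- app_assoc; reflexivity).
    rewrite Hsplit in Hp. apply path_cond_app in Hp as (Hp1 & Hp2 & Hlast).
    assert (Hlt : length t2 < n) by (rewrite Hn, length_app; simpl; lia).
    destruct (IH _ Hlt x t2 eq_refl Hx Hp2 He) as (cs & _ & Hcs & Heq).
    exists ((e1 :: t1) :: cs). split; [discriminate|]. split.
    + constructor; auto. apply (closed_path_intro (e := x)); auto.
      rewrite <- Hx. apply Hlast. discriminate.
    + simpl. rewrite <- Heq. reflexivity.
Qed.

End ClosedPaths.

Lemma nth_error_concat_repeat (c : list E) cs i :
  Forall (eq c) cs -> i < length (concat cs) ->
  nth_error (concat cs) i = nth_error c (i mod length c).
Proof.
  intros Hcs. revert i. induction Hcs as [|c' cs <- _ IH]; intros i Hi; simpl in *; [lia|].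
  rewrite length_app in Hi.
  destruct (Nat.lt_ge_cases i (length c)) as [Hlt|Hge].
  - rewrite nth_error_app1, Nat.mod_small; auto.
  - rewrite nth_error_app2, IH by lia.
    rewrite <- (Nat.Div0.mod_add (i - length c) 1 (length c)).
    f_equal. f_equal. lia.
Qed.

End Paths.

Section Forward.
Variables (V E : Type) (s : E -> V) (r : E -> V -> Prop) (Y : xpt V E -> Prop).
Hypothesis HYX : forall y, Y y -> inX s r y.
Hypothesis HYirr : irreducible s r Y.
Hypothesis Huniq : forall v c1 c2, closed_path s r v c1 -> closed_path s r v c2 -> c1 = c2.

Lemma prefix_in_lang f n : Y (Inf V f) -> in_lang s r Y (prefix f (S n)).
Proof.
  intros HY. assert (Hf : is_infpath s r f) by exact (HYX HY).
  split; [split; [unfold prefix; simpl; discriminate | apply prefix_path, Hf]|].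
  exists (fun k => f (S n + k)). split.
  - intros i. replace (S n + S i) with (S (S n + i)) by lia. apply Hf.
  - rewrite concat_inf_prefix. exact HY.
Qed.

(** Joining the prefix of length [i+1] of a point back to its first edge
    yields a path from [v = s (f 0)] back to [v], i.e. closed paths at [v]. *)
Lemma point_return_paths f i : Y (Inf V f) ->
  exists cs, cs <> [] /\ Forall (closed_path s r (s (f 0))) cs /\
             nth_error (concat cs) i = Some (f i).
Proof.
  intros HY.
  destruct (HYirr (prefix_in_lang i HY) (prefix_in_lang 0 HY)) as (z & _ & (_ & Hp) & _).
  change (prefix f 1) with [f 0] in Hp. rewrite app_assoc in Hp.
  assert (Hhead : prefix f (S i) ++ z = f 0 :: (map f (seq 1 i) ++ z)) by reflexivity.
  rewrite Hhead in Hp.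
  destruct (return_path_decomposition eq_refl Hp eq_refl) as (cs & Hne & Hcs & Hcat).
  exists cs. repeat split; auto. rewrite <- Hcat, <- Hhead.
  rewrite nth_error_app1 by (rewrite prefix_length; lia). apply nth_error_prefix. lia.
Qed.

Lemma point_periodic f : Y (Inf V f) ->
  exists c, closed_path s r (s (f 0)) c /\
            forall i, nth_error c (i mod length c) = Some (f i).
Proof.
  intros HY.
  destruct (point_return_paths 0 HY) as ([|c cs0] & Hne & Hcs0 & _); [congruence|].
  pose proof (Forall_inv Hcs0) as Hc.
  exists c. split; [exact Hc|]. intros i.
  destruct (point_return_paths i HY) as (cs & _ & Hcs & Hi).
  assert (Hrep : Forall (eq c) cs).
  { rewrite Forall_forall in Hcs |- *. intros c' Hc'.
    exact (Huniq Hc (Hcs c' Hc')). }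
  rewrite <- (nth_error_concat_repeat Hrep), Hi; [reflexivity|].
  apply nth_error_Some. rewrite Hi. discriminate.
Qed.

Lemma point_determined_by_source f g :
  Y (Inf V f) -> Y (Inf V g) -> s (f 0) = s (g 0) -> f = g.
Proof.
  intros Hf Hg Hsrc.
  destruct (point_periodic Hf) as (c & Hc & Pf).
  destruct (point_periodic Hg) as (c' & Hc' & Pg).
  rewrite Hsrc in Hc. rewrite (Huniq Hc Hc') in Pf.
  apply functional_extensionality. intros i.
  assert (Heq : Some (f i) = Some (g i)) by (rewrite <- Pf, <- Pg; reflexivity).
  injection Heq. auto.
Qed.

(** Infinite points are coded by their initial vertex, finite points by
    their index as ultrapaths. *)
Lemma countable_without_two_closed_paths p :
  countable_type V -> ultrapath_enumeration s r p -> ~ uncountable_set Y.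
Proof.
  intros (hV & HhV) Hp Hunc. apply Hunc.
  exists (fun x => match x with
                   | Inf _ f => 2 * hV (s (f 0))
                   | Fin a A => S (2 * upath_index p (a, A))
                   end).
  intros [f|a A] [g|b B] Hx Hy Heq; try lia.
  - f_equal. apply point_determined_by_source; auto. apply HhV. lia.
  - assert (Hidx : upath_index p (a, A) = upath_index p (b, B)) by lia.
    pose proof (upath_index_spec Hp (fin_point_ultrapath (HYX Hx))) as Ha.
    pose proof (upath_index_spec Hp (fin_point_ultrapath (HYX Hy))) as Hb.
    rewrite Hidx, Hb in Ha. injection Ha as -> ->. reflexivity.
Qed.

End Forward.

Lemma two_closed_paths_of_irreducible_uncountable V E (s : E -> V) r p (Y : xpt V E -> Prop) :
  countable_type V -> ultrapath_enumeration s r p ->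
  (forall y, Y y -> inX s r y) -> uncountable_set Y -> irreducible s r Y ->
  exists v c1 c2, closed_path s r v c1 /\ closed_path s r v c2 /\ c1 <> c2.
Proof.
  intros HV Hp HYX Hunc Hirr. apply NNPP. intros Hno.
  refine (countable_without_two_closed_paths HYX Hirr _ HV Hp Hunc).
  intros v c1 c2 H1 H2. apply NNPP. intros Hne. apply Hno. exists v, c1, c2. auto.
Qed.

Lemma bool_sequences_uncountable :
  ~ exists G : (nat -> bool) -> nat, forall b b', G b = G b' -> b = b'.
Proof.
  intros [G HG].
  set (H := fun n => epsilon (inhabits (fun _ : nat => true)) (fun b => G b = n)).
  set (D := fun k => negb (H k k)).
  assert (HD : G (H (G D)) = G D)
    by exact (epsilon_spec _ (fun b => G b = G D) (ex_intro _ D eq_refl)).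
  apply HG in HD. assert (X := f_equal (fun h => h (G D)) HD). cbv beta in X.
  change (D (G D)) with (negb (H (G D) (G D))) in X.
  destruct (H (G D) (G D)); discriminate.
Qed.

Lemma uncountable_of_injection V E (Y : xpt V E -> Prop) (h : (nat -> bool) -> xpt V E) :
  (forall b, Y (h b)) -> (forall b b', h b = h b' -> b = b') -> uncountable_set Y.
Proof.
  intros HY Hh [F HF]. apply bool_sequences_uncountable.
  exists (fun b => F (h b)). intros b b' Heq. apply Hh, HF; auto.
Qed.

Section Limits.
Variables (V E : Type) (s : E -> V) (r : E -> V -> Prop) (p : nat -> list E * (V -> Prop)).
Hypothesis Hp : ultrapath_enumeration s r p.
Variable Y : xpt V E -> Prop.
Hypothesis HYinf : forall y, Y y -> exists g, y = Inf V g /\ is_infpath s r g.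

Definition limit_point (x : xpt V E) : Prop := forall k, exists y, Y y /\ agree_upto s p k x y.

(** The ultrapath [(f_0 ... f_(n-1), {s (f n)})] forces every point close
    enough to an infinite limit [f] to share its first [n] edges. *)
Lemma limit_inf_prefixes f :
  is_infpath s r f -> limit_point (Inf V f) ->
  forall n, exists g, Y (Inf V g) /\ forall i, i < n -> g i = f i.
Proof.
  intros Hf Hlim n.
  set (q := (prefix f n, fun w => w = s (f n))).
  destruct (Hlim (upath_index p q)) as (y & HY & Hag).
  destruct (HYinf HY) as (g & -> & _).
  assert (Hseg : initial_segment s q (Inf V f)).
  { unfold q. simpl. rewrite prefix_length. split; [|reflexivity].
    intros i Hi. symmetry. apply nth_error_prefix, Hi. }
  pose proof (Hag _ (le_n _)) as Hk.
  unfold q in Hk. rewrite (upath_index_spec Hp (prefix_ultrapath n Hf)) in Hk.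
  apply Hk in Hseg as [Hg _]. rewrite prefix_length in Hg.
  exists g. split; [exact HY|]. intros i Hi.
  specialize (Hg i Hi). rewrite nth_error_prefix in Hg by exact Hi. congruence.
Qed.

(** If the points of [Y] only use edges from a finite list [L], a finite
    point [(a, A)] of X is not a limit of [Y]: near [(a, A)] a point of [Y]
    continues [a] by some [e] in [L], and the ultrapath [(a e, r e)] is an
    initial segment of that point but not of [(a, A)]. *)
Lemma limit_not_fin (L : list E) a A :
  (forall g i, Y (Inf V g) -> In (g i) L) -> inX s r (Fin a A) -> ~ limit_point (Fin a A).
Proof.
  intros HL HX Hlim.
  set (idx := fun e => upath_index p (a ++ [e], r e)).
  set (K := max (upath_index p (a, A)) (list_max (map idx L))).
  destruct (Hlim K) as (y & HY & Hag).
  destruct (HYinf HY) as (g & -> & Hg).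
  assert (Hseg : initial_segment s (a, A) (Inf V g)).
  { pose proof (Hag _ (Nat.le_max_l _ _)) as Hk.
    rewrite (upath_index_spec Hp (fin_point_ultrapath HX)) in Hk.
    apply Hk. simpl. right. split; [reflexivity | intros w Hw; exact Hw]. }
  destruct Hseg as [Hpre HA].
  set (e := g (length a)).
  assert (Hq : is_ultrapath s r (a ++ [e], r e)).
  { apply ultrapath_intro.
    - intros Hnil. apply app_eq_nil in Hnil as [_ Hnil]. discriminate.
    - exact (fin_point_extend HX HA).
    - apply gen0_range.
    - rewrite last_range_snoc. intros w Hw. exact Hw. }
  assert (HidxK : idx e <= K).
  { assert (Hmax : Forall (fun k => k <= list_max (map idx L)) (map idx L))
      by (apply list_max_le; reflexivity).
    rewrite Forall_forall in Hmax. specialize (Hmax (idx e) (in_map idx L e (HL g _ HY))).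
    unfold K. lia. }
  assert (Hsegq : initial_segment s (a ++ [e], r e) (Inf V g)).
  { simpl. rewrite length_app. simpl. split.
    - intros i Hi. destruct (Nat.lt_ge_cases i (length a)).
      + rewrite nth_error_app1 by assumption. apply Hpre. assumption.
      + rewrite nth_error_app2 by assumption. replace i with (length a) by lia.
        rewrite Nat.sub_diag. reflexivity.
    - rewrite Nat.add_1_r. apply Hg. }
  pose proof (Hag _ HidxK) as Hk. unfold idx in Hk.
  rewrite (upath_index_spec Hp Hq) in Hk. apply Hk in Hsegq.
  destruct Hsegq as [(e' & gamma & Heq & _) | [Heq _]];
    apply (f_equal (@length E)) in Heq; rewrite !length_app in Heq; simpl in Heq; lia.
Qed.

End Limits.

Section Coding.
Variables (V E : Type) (s : E -> V) (r : E -> V -> Prop).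
Variables (v : V) (c1 c2 : list E) (d : E).
Hypotheses (Hc1 : closed_path s r v c1) (Hc2 : closed_path s r v c2) (Hneq : c1 <> c2).

(** The [k]-th word coded by [b] ([d] is only a default edge for [nth]). *)
Definition word (b : nat -> bool) (k : nat) : list E := if b k then c1 else c2.

Definition shiftb (m : nat) (b : nat -> bool) : nat -> bool := fun k => b (m + k).

Fixpoint catn (b : nat -> bool) (n : nat) : list E :=
  match n with
  | 0 => []
  | S n => word b 0 ++ catn (shiftb 1 b) n
  end.

Definition conc (b : nat -> bool) (i : nat) : E := nth i (catn b (S i)) d.

Lemma word_closed b k : closed_path s r v (word b k).
Proof. unfold word. destruct (b k); assumption. Qed.

Lemma catn_add b m n : catn b (m + n) = catn b m ++ catn (shiftb m b) n.
Proof.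
  revert b. induction m as [|m IH]; intros b; [reflexivity|].
  simpl. rewrite IH, app_assoc. reflexivity.
Qed.

Lemma catn_length b n : n <= length (catn b n).
Proof.
  revert b. induction n as [|n IH]; intros b; simpl; [lia|].
  rewrite length_app. pose proof (closed_path_length (word_closed b 0)).
  specialize (IH (shiftb 1 b)). lia.
Qed.

Lemma catn_path b n : path_cond s r (catn b n) /\ starts_at s v (catn b n).
Proof.
  revert b. induction n as [|n IH]; intros b; simpl.
  - split; [exact I | discriminate].
  - destruct (IH (shiftb 1 b)) as [Hp Hst]. exact (closed_path_app (word_closed b 0) Hp Hst).
Qed.

Lemma catn_incl b n : incl (catn b n) (c1 ++ c2).
Proof.
  revert b. induction n as [|n IH]; intros b; simpl; [intros x []|].
  apply incl_app; [|apply IH].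
  unfold word. destruct (b 0); auto using incl_appl, incl_appr, incl_refl.
Qed.

Lemma catn_agree b b' m : (forall k, k < m -> b k = b' k) -> catn b m = catn b' m.
Proof.
  revert b b'. induction m as [|m IH]; intros b b' H; [reflexivity|]. simpl.
  unfold word at 1 2. rewrite (H 0) by lia. f_equal.
  apply IH. intros k Hk. apply H. lia.
Qed.

Lemma conc_catn b n i : i < length (catn b n) -> conc b i = nth i (catn b n) d.
Proof.
  intros Hi. unfold conc. pose proof (catn_length b (S i)).
  rewrite <- (app_nth1 _ (catn (shiftb (S i) b) n)) by lia. rewrite <- catn_add.
  rewrite Nat.add_comm, catn_add. apply app_nth1, Hi.
Qed.

Lemma conc_shift b m i : conc b (length (catn b m) + i) = conc (shiftb m b) i.
Proof.
  pose proof (catn_length (shiftb m b) (S i)).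
  rewrite (conc_catn (n := m + S i)) by (rewrite catn_add, length_app; lia).
  rewrite catn_add, app_nth2 by lia. rewrite Nat.add_comm, Nat.add_sub. reflexivity.
Qed.

Lemma conc_infpath b : is_infpath s r (conc b).
Proof.
  intros i. pose proof (catn_length b (S (S i))).
  rewrite !(conc_catn (n := S (S i))) by lia.
  apply (path_cond_nth s r _ d); [apply (catn_path b (S (S i))) | lia].
Qed.

Lemma conc_in b i : In (conc b i) (c1 ++ c2).
Proof.
  apply (catn_incl (b := b) (n := S i)), nth_In. pose proof (catn_length b (S i)). lia.
Qed.

Lemma conc_first_word b :
  (forall i, i < length (word b 0) -> nth_error (word b 0) i = Some (conc b i)) /\
  s (conc b (length (word b 0))) = v.
Proof.
  assert (H1 : catn b 1 = word b 0) by apply app_nil_r.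
  split.
  - intros i Hi. rewrite (conc_catn (n := 1)), H1 by (rewrite H1; exact Hi).
    apply nth_error_nth'. exact Hi.
  - rewrite <- H1, <- (Nat.add_0_r (length _)), conc_shift.
    unfold conc. simpl. rewrite app_nil_r. exact (closed_path_head d (word_closed _ 0)).
Qed.

(** Closed paths at [v] form a prefix code and [c1 <> c2], so the first
    word of [b] can be read off [conc b]. *)
Lemma conc_head_eq b b' : conc b = conc b' -> b 0 = b' 0.
Proof.
  intros H.
  destruct (conc_first_word b) as [Hb Hbv]. destruct (conc_first_word b') as [Hb' Hbv'].
  rewrite <- H in Hb', Hbv'.
  pose proof (closed_path_first_return (word_closed b 0) (word_closed b' 0) Hb Hbv Hb' Hbv') as Hw.
  unfold word in Hw. destruct (b 0), (b' 0); congruence.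
Qed.

Lemma conc_tail_eq b b' : conc b = conc b' -> conc (shiftb 1 b) = conc (shiftb 1 b').
Proof.
  intros H. assert (Hcat : catn b 1 = catn b' 1).
  { apply catn_agree. intros k Hk. replace k with 0 by lia. apply conc_head_eq, H. }
  apply functional_extensionality. intros i.
  rewrite <- !conc_shift, Hcat, H. reflexivity.
Qed.

Lemma conc_injective b b' : conc b = conc b' -> b = b'.
Proof.
  intros H. apply functional_extensionality. intros k. revert b b' H.
  induction k as [|k IH]; intros b b' H; [apply conc_head_eq, H|].
  exact (IH (shiftb 1 b) (shiftb 1 b') (conc_tail_eq H)).
Qed.

Definition occurs (w : list E) (b : nat -> bool) (j : nat) : Prop :=
  forall i, i < length w -> nth i w d = conc b (j + i).

Lemma occurs_app u w b j : occurs u b j -> occurs w b (j + length u) -> occurs (u ++ w) b j.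
Proof.
  intros Hu Hw i Hi. rewrite length_app in Hi. destruct (Nat.lt_ge_cases i (length u)).
  - rewrite app_nth1 by assumption. apply Hu. assumption.
  - rewrite app_nth2, Hw by lia. f_equal. lia.
Qed.

Lemma occurs_window b j n : occurs (prefix (fun i => conc b (j + i)) n) b j.
Proof. intros i Hi. rewrite prefix_length in Hi. rewrite nth_prefix by exact Hi. reflexivity. Qed.

Definition coded_subshift (x : xpt V E) : Prop :=
  match x with
  | Inf _ f => forall n, exists b j, forall i, i < n -> f i = conc b (j + i)
  | Fin _ _ => False
  end.

Lemma conc_coded b : coded_subshift (Inf V (conc b)).
Proof. intros n. exists b, 0. reflexivity. Qed.

Lemma coded_subshift_infinite y :
  coded_subshift y -> exists g, y = Inf V g /\ is_infpath s r g.
Proof.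
  destruct y as [f|a A]; simpl; [|contradiction]. intros H. exists f. split; [reflexivity|].
  intros i. destruct (H (S (S i))) as (b & j & Hb). rewrite !Hb by lia.
  rewrite Nat.add_succ_r. apply conc_infpath.
Qed.

Lemma coded_subshift_inX y : coded_subshift y -> inX s r y.
Proof. intros Hy. destruct (coded_subshift_infinite Hy) as (g & -> & Hg). exact Hg. Qed.

Lemma coded_subshift_shift : shift_invariant coded_subshift.
Proof.
  intros [f|a A] H; simpl in *; [|contradiction]. intros n.
  destruct (H (S n)) as (b & j & Hb). exists b, (S j). intros i Hi.
  rewrite Hb by lia. f_equal. lia.
Qed.

Lemma coded_subshift_uncountable : uncountable_set coded_subshift.
Proof.
  apply (uncountable_of_injection (h := fun b => Inf V (conc b))); [apply conc_coded|].
  intros b b' Heq. injection Heq. apply conc_injective.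
Qed.

Lemma in_lang_occurs w : in_lang s r coded_subshift w -> exists b j, occurs w b j.
Proof.
  intros [_ (g & _ & HY)]. destruct (HY (length w)) as (b & j & Hb).
  exists b, j. intros i Hi. rewrite <- Hb by exact Hi. unfold concat_inf.
  destruct (Nat.ltb_spec i (length w)); [apply nth_indep, Hi | lia].
Qed.

Lemma occurs_in_lang w b j : w <> [] -> occurs w b j -> in_lang s r coded_subshift w.
Proof.
  intros Hne Hw. split.
  - split; [exact Hne|]. apply (path_cond_nth s r _ d). intros i Hi.
    rewrite !Hw by lia. rewrite Nat.add_succ_r. apply conc_infpath.
  - exists (fun k => conc b (j + length w + k)). split.
    + intros i. rewrite Nat.add_succ_r. apply conc_infpath.
    + intros n. exists b, j. intros i _. unfold concat_inf.
      destruct (Nat.ltb_spec i (length w)).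
      * rewrite (nth_indep _ _ d) by assumption. apply Hw. assumption.
      * f_equal. lia.
Qed.

Definition splice (b b' : nat -> bool) (m : nat) : nat -> bool :=
  fun k => if k <? m then b k else b' (k - m).

Lemma catn_splice b b' m : catn (splice b b' m) m = catn b m.
Proof.
  apply catn_agree. intros k Hk. unfold splice. destruct (Nat.ltb_spec k m); [reflexivity | lia].
Qed.

Lemma conc_splice_left b b' m i :
  i < length (catn b m) -> conc (splice b b' m) i = conc b i.
Proof.
  intros Hi. rewrite (conc_catn (n := m)) by (rewrite catn_splice; exact Hi).
  rewrite catn_splice. symmetry. apply conc_catn, Hi.
Qed.

Lemma conc_splice_right b b' m i :
  conc (splice b b' m) (length (catn b m) + i) = conc b' i.
Proof.
  assert (Hshift : shiftb m (splice b b' m) = b').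
  { apply functional_extensionality. intros k. unfold shiftb, splice.
    destruct (Nat.ltb_spec (m + k) m); [lia|]. f_equal. lia. }
  rewrite <- (catn_splice b b' m), conc_shift, Hshift. reflexivity.
Qed.

(** Irreducibility: given occurrences of [u] in [conc b] and of [w] in
    [conc b'], both occur in the spliced coding, with a gap word [z] between. *)
Lemma coded_subshift_irreducible : irreducible s r coded_subshift.
Proof.
  intros u w Hu Hw.
  destruct (in_lang_occurs Hu) as (b & j & Hub). destruct (in_lang_occurs Hw) as (b' & j' & Hwb).
  assert (Hune : u <> []) by (destruct Hu as [[Hne _] _]; exact Hne).
  set (m := S (j + length u)).
  set (P := length (catn b m)).
  assert (HP : m <= P) by apply catn_length.
  set (b'' := splice b b' m).
  set (z := prefix (fun i => conc b'' (j + length u + i)) (P + j' - (j + length u))).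
  assert (Hzlen : length z = P + j' - (j + length u)) by apply prefix_length.
  assert (Hz : occurs z b'' (j + length u)) by apply occurs_window.
  exists z. split.
  - apply (occurs_in_lang (b := b'') (j := j + length u)); [|exact Hz].
    intros Hnil. rewrite Hnil in Hzlen. simpl in Hzlen. lia.
  - apply (occurs_in_lang (b := b'') (j := j)).
    { intros Hnil. apply app_eq_nil in Hnil as [Hnil _]. contradiction. }
    apply occurs_app; [|apply occurs_app; [exact Hz|]].
    + intros i Hi. rewrite Hub by exact Hi. symmetry. apply conc_splice_left. lia.
    + intros i Hi. rewrite Hwb by exact Hi.
      replace (j + length u + length z + i) with (P + (j' + i)) by lia.
      symmetry. apply conc_splice_right.
Qed.

(** Closedness: limits of infinite points are infinite points (the codings
    only use edges of [c1 ++ c2]) whose prefixes are prefixes of points. *)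
Lemma coded_subshift_closed p :
  ultrapath_enumeration s r p -> closed_in_X s r p coded_subshift.
Proof.
  intros Hp [f|a A] Hx Hlim.
  - intros n.
    destruct (limit_inf_prefixes Hp coded_subshift_infinite Hx Hlim n) as (g & Hg & Hgf).
    destruct (Hg n) as (b & j & Hb). exists b, j. intros i Hi. rewrite <- Hgf, Hb; auto.
  - apply (limit_not_fin Hp coded_subshift_infinite (L := c1 ++ c2)) in Hlim;
      [contradiction | | exact Hx].
    intros g i Hg. destruct (Hg (S i)) as (b & j & Hb). rewrite Hb by lia. apply conc_in.
Qed.

End Coding.

Lemma subshift_of_two_closed_paths V E (s : E -> V) r p v c1 c2 :
  ultrapath_enumeration s r p ->
  closed_path s r v c1 -> closed_path s r v c2 -> c1 <> c2 ->
  exists Y : xpt V E -> Prop,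
    (forall y, Y y -> inX s r y) /\
    closed_in_X s r p Y /\ shift_invariant Y /\ uncountable_set Y /\ irreducible s r Y.
Proof.
  intros Hp H1 H2 Hne. pose proof H1 as (_ & (d & _) & _).
  exists (coded_subshift (V := V) c1 c2 d). repeat split.
  - exact (coded_subshift_inX (d := d) H1 H2).
  - exact (coded_subshift_closed (d := d) H1 H2 Hp).
  - exact (@coded_subshift_shift V E c1 c2 d).
  - exact (coded_subshift_uncountable (d := d) H1 H2 Hne).
  - exact (coded_subshift_irreducible (d := d) H1 H2).
Qed.

Unset Implicit Arguments.

Theorem proposition3p9 (V E : Type) (s : E -> V) (r : E -> V -> Prop)
  (HV : countable_type V) (HE : countable_type E)
  (Hr : forall e, exists v, r e v)
  (Hnosink : forall v, exists e, s e = v)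
  (p : nat -> list E * (V -> Prop))
  (Hp : ultrapath_enumeration s r p) :
  (exists Y : xpt V E -> Prop,
      (forall y, Y y -> inX s r y) /\
      closed_in_X s r p Y /\ shift_invariant Y /\ uncountable_set Y /\
      irreducible s r Y)
  <->
  (exists v c1 c2, closed_path s r v c1 /\ closed_path s r v c2 /\ c1 <> c2).
Proof.
  split.
  - intros (Y & HYX & _ & _ & Hunc & Hirr).
    exact (two_closed_paths_of_irreducible_uncountable HV Hp HYX Hunc Hirr).
  - intros (v & c1 & c2 & H1 & H2 & Hne).
    exact (subshift_of_two_closed_paths Hp H1 H2 Hne).
Qed.
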